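(* Let $(S,\mathcal{S})$ be a measurable space with $\Delta\in\mathcal{S}\otimes\mathcal{S}$ and let $\pi$ be a constructive cr-set. Then there exists $F\in\mathcal{S}$ such that (i) $\pi\cap F$ possesses a version that is $\sigma$-finite on $\mathcal{S}$, and (ii) for all $A\in\mathcal{S}$, either $P((\pi\cap F^{c})\cap A\neq \emptyset)=0$ or $P(|(\pi\cap F^{c})\cap A|=\infty)>0$. Moreover, if two sets $F_{1},F_{2}\in\mathcal{S}$ both satisfy (i) and (ii), then $P(\pi\cap (F_{1}\triangle F_{2})\neq \emptyset)=0$.
   Context: $\Delta=\{(x,x)\mid x\in S\}$. $(\Omega,\mathcal{F},P)$ is a probability space; $C(S)$ is the set of countable subsets of $S$; $N_A(M)=|A\cap M|$; $\mathcal{C}(\mathcal{S})=\sigma(N_A\mid A\in\mathcal{S})$; a cr-set is an $\mathcal{F}$-$\mathcal{C}(\mathcal{S})$ measurable map $\Omega\to C(S)$, finite if its values are finite sets. A map $\tau:\Omega\to C(S)$ is constructive if $\tau(\omega)=\bigcup_k\pi_k(\omega)$ for all $\omega$ for some finite cr-sets $\pi_k$, $k\in\mathbb{N}$. For $A\in\mathcal{S}$, $\pi\cap A$ denotes the cr-set $\omega\mapsto\pi(\omega)\cap A$. A version of a cr-set $\pi$ is a cr-set $\pi'$ with $\pi'(\omega)=\pi(\omega)$ for all $\omega$ outside a $P$-null set in $\mathcal{F}$. A map $\tau$ is $\sigma$-finite on $\mathcal{S}$ if there are $A_n\in\mathcal{S}$ with $S=\bigcup_nA_n$ and $|\tau(\omega)\cap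 A_n|<\infty$ for all $\omega$ and $n$. *)

From Stdlib Require Import Reals List.
Open Scope R_scope.

Definition set (T : Type) := T -> Prop.

Definition sigma_algebra {T : Type} (Sg : set (set T)) : Prop :=
  Sg (fun _ => True) /\
  (forall A, Sg A -> Sg (fun x => ~ A x)) /\
  (forall A : nat -> set T, (forall n, Sg (A n)) -> Sg (fun x => exists n, A n x)).

Definition gen_sigma {T : Type} (G : set (set T)) : set (set T) :=
  fun X => forall H : set (set T), sigma_algebra H -> (forall Y, G Y -> H Y) -> H X.

Definition prod_sigma {T : Type} (Sg : set (set T)) : set (set (T * T)) :=
  gen_sigma (fun X => exists A B, Sg A /\ Sg B /\
                         forall p : T * T, X p <-> (A (fst p) /\ B (snd p))).

Definition diagonal (T : Type) : set (T * T) := fun p => fst p = snd p.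

(** Probability measure P on (Omega, F): nonnegative, total mass 1,
    countably additive on F (P is given as a function on all subsets,
    only its values on F matter). *)
Definition probability {Omega : Type} (F : set (set Omega)) (P : set Omega -> R) : Prop :=
  sigma_algebra F /\
  (forall A, F A -> 0 <= P A) /\
  P (fun _ => True) = 1 /\
  (forall A : nat -> set Omega, (forall n, F (A n)) ->
     (forall m n x, m <> n -> A m x -> A n x -> False) ->
     infinite_sum (fun n => P (A n)) (P (fun w => exists n, A n w))).

(** Cardinality in N u {oo}:  card_is X (Some n) iff |X| = n,
    card_is X None iff X is infinite. *)
Definition card_is {T : Type} (X : set T) (k : option nat) : Prop :=
  match k with
  | Some n => exists l : list T, length l = n /\ NoDup l /\ forall x, X x <-> In x l
  | None => forall l : list T, exists x, X x /\ ~ In x l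
  end.

Definition finite_set {T : Type} (X : set T) : Prop := exists n, card_is X (Some n).

Definition countable_set {T : Type} (X : set T) : Prop :=
  exists f : nat -> option T, forall x, X x -> exists n, f n = Some x.

Definition setI {T : Type} (X Y : set T) : set T := fun x => X x /\ Y x.

Definition N_ {T : Type} (A : set T) (M : set T) (k : option nat) : Prop :=
  card_is (setI A M) k.

(** C(S) = sigma(N_A | A in S) on the countable subsets of T
    (we let it act on all subsets; cr-sets only take countable values),
    with N_A valued in N u {oo} carrying the discrete sigma-algebra. *)
Definition CS {T : Type} (Sg : set (set T)) : set (set (set T)) :=
  gen_sigma (fun X => exists (A : set T) (B : set (option nat)), Sg A /\
                 forall M, X M <-> exists k, N_ A M k /\ B k).

Definition cr_set {Omega T : Type} (F : set (set Omega)) (Sg : set (set T))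
    (pi : Omega -> set T) : Prop :=
  (forall w, countable_set (pi w)) /\
  (forall X, CS Sg X -> F (fun w => X (pi w))).

Definition finite_cr_set {Omega T : Type} (F : set (set Omega)) (Sg : set (set T))
    (pi : Omega -> set T) : Prop :=
  cr_set F Sg pi /\ forall w, finite_set (pi w).

Definition constructive {Omega T : Type} (F : set (set Omega)) (Sg : set (set T))
    (pi : Omega -> set T) : Prop :=
  exists pik : nat -> Omega -> set T,
    (forall k, finite_cr_set F Sg (pik k)) /\
    forall w x, pi w x <-> exists k, pik k w x.

Definition cr_inter {Omega T : Type} (pi : Omega -> set T) (A : set T) : Omega -> set T :=
  fun w => setI (pi w) A.

Definition version {Omega T : Type} (F : set (set Omega)) (P : set Omega -> R)
    (Sg : set (set T)) (pi pi' : Omega -> set T) : Prop :=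
  cr_set F Sg pi' /\
  exists N : set Omega, F N /\ P N = 0 /\
    forall w, ~ N w -> forall x, pi' w x <-> pi w x.

Definition sigma_finite_on {Omega T : Type} (Sg : set (set T)) (tau : Omega -> set T) : Prop :=
  exists An : nat -> set T,
    (forall n, Sg (An n)) /\ (forall x, exists n, An n x) /\
    forall w n, finite_set (setI (tau w) (An n)).

Definition setC {T : Type} (X : set T) : set T := fun x => ~ X x.
Definition symdiff {T : Type} (X Y : set T) : set T :=
  fun x => (X x /\ ~ Y x) \/ (Y x /\ ~ X x).

Definition prop_i {Omega T : Type} (F : set (set Omega)) (P : set Omega -> R)
    (Sg : set (set T)) (pi : Omega -> set T) (F0 : set T) : Prop :=
  exists pi', version F P Sg (cr_inter pi F0) pi' /\ sigma_finite_on Sg pi'.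

Definition prop_ii {Omega T : Type} (P : set Omega -> R)
    (Sg : set (set T)) (pi : Omega -> set T) (F0 : set T) : Prop :=
  forall A, Sg A ->
    P (fun w => exists x, cr_inter (cr_inter pi (setC F0)) A w x) = 0 \/
    P (fun w => card_is (cr_inter (cr_inter pi (setC F0)) A w) None) > 0.

From Stdlib Require Import Reals List Classical ClassicalEpsilon FunctionalExtensionality
  PropExtensionality Lra Lia Cantor.
Open Scope R_scope.

(** Call B ∈ S _a.s. finite_ for π if P(|π ∩ B| = ∞) = 0, and let Gs be the class of
  countable unions of a.s. finite sets of S ([as_sigma_finite]).
  - Every G ∈ Gs satisfies (i): outside the null set where some |π ∩ B_i| is infinite,
    π ∩ G is finite on each B_i and empty on G^c, hence σ-finite.
  - Write π = ⋃_k π_k with finite cr-sets π_k.  Since Gs is closed under countable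
    unions, some G* ∈ Gs maximises all the countably many numbers P(|π_k ∩ G| ≥ j)
    at once ([simultaneous_maximizer]).  If (ii) failed for A, then A \ G* would be
    a.s. finite but hit by π with positive probability; adding it to G* strictly
    increases one of these numbers ([enlarging_increases_count]), a contradiction.
  - Uniqueness: if F1 satisfies (i) with σ-finite cover (A_n) and F2 satisfies (ii),
    then (ii) applied to F1 ∩ A_n forces P(π meets F1 ∩ A_n \ F2) = 0, since π is
    a.s. finite on A_n.  Symmetrising gives the claim. *)

Lemma set_ext {A : Type} (X Y : set A) : (forall x, X x <-> Y x) -> X = Y.
Proof. intro H; extensionality x; apply propositional_extensionality; auto. Qed.

Lemma sa_ext {T : Type} (Sg : set (set T)) (A B : set T) :
  Sg A -> (forall x, A x <-> B x) -> Sg B.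
Proof. intros h e; replace B with A by (apply set_ext; auto); exact h. Qed.

Section SigmaAlgebraFacts.
Variable T : Type.
Variable Sg : set (set T).
Hypothesis hS : sigma_algebra Sg.

Lemma sa_full : Sg (fun _ => True).
Proof. exact (proj1 hS). Qed.

Lemma sa_compl (A : set T) : Sg A -> Sg (fun x => ~ A x).
Proof. apply (proj1 (proj2 hS)). Qed.

Lemma sa_union (A : nat -> set T) : (forall n, Sg (A n)) -> Sg (fun x => exists n, A n x).
Proof. apply (proj2 (proj2 hS)). Qed.

Lemma sa_empty : Sg (fun _ => False).
Proof. apply (sa_ext _ _ _ (sa_compl _ sa_full)); tauto. Qed.

Lemma sa_union2 (A B : set T) : Sg A -> Sg B -> Sg (fun x => A x \/ B x).
Proof.
  intros hA hB.
  apply (sa_ext _ _ _ (sa_union (fun n => match n with 0%nat => A | _ => B end)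
                          ltac:(intros [|n]; auto))).
  intro x; split.
  - intros [[|n] H]; auto.
  - intros [H|H]; [exists 0%nat | exists 1%nat]; auto.
Qed.

Lemma sa_inter (A B : set T) : Sg A -> Sg B -> Sg (fun x => A x /\ B x).
Proof.
  intros hA hB.
  apply (sa_ext _ _ _ (sa_compl _ (sa_union2 _ _ (sa_compl _ hA) (sa_compl _ hB)))).
  intro x; split; [intro H; split; apply NNPP; tauto | tauto].
Qed.

Lemma sa_diff (A B : set T) : Sg A -> Sg B -> Sg (fun x => A x /\ ~ B x).
Proof. intros hA hB; apply sa_inter; [exact hA | apply sa_compl; exact hB]. Qed.

End SigmaAlgebraFacts.

Arguments sa_full {T Sg}.
Arguments sa_compl {T Sg}.
Arguments sa_union {T Sg}.
Arguments sa_empty {T Sg}.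
Arguments sa_union2 {T Sg}.
Arguments sa_inter {T Sg}.
Arguments sa_diff {T Sg}.

Lemma gen_sigma_sigma_algebra {T : Type} (G : set (set T)) : sigma_algebra (gen_sigma G).
Proof.
  split; [|split].
  - intros H hH _. exact (sa_full hH).
  - intros A hA H hH hg. exact (sa_compl hH _ (hA H hH hg)).
  - intros A hA H hH hg. exact (sa_union hH _ (fun n => hA n H hH hg)).
Qed.

Lemma gen_sigma_incl {T : Type} (G : set (set T)) (X : set T) : G X -> gen_sigma G X.
Proof. intros h H _ hg; auto. Qed.

Lemma infinite_sum_const (c l : R) : infinite_sum (fun _ => c) l -> c = 0.
Proof.
  intro H. apply NNPP; intro Hc.
  assert (Hp : Rabs c / 2 > 0) by (pose proof (Rabs_pos_lt c Hc); lra).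
  destruct (H _ Hp) as [N HN].
  pose proof (HN N ltac:(lia)) as H1. pose proof (HN (S N) ltac:(lia)) as H2.
  simpl in H2. unfold Rdist in *.
  apply Rabs_def2 in H1. apply Rabs_def2 in H2.
  unfold Rabs in *. destruct (Rcase_abs c); lra.
Qed.

Lemma infinite_sum_stationary (f : nat -> R) (N : nat) :
  (forall n, (N < n)%nat -> f n = 0) -> infinite_sum f (sum_f_R0 f N).
Proof.
  intros h eps He. exists N. intros n Hn.
  assert (Hs : sum_f_R0 f n = sum_f_R0 f N).
  { induction n as [|n IH]; [replace N with 0%nat by lia; reflexivity|].
    destruct (Nat.eq_dec (S n) N) as [<-|hne]; [reflexivity|].
    simpl. rewrite IH by lia. rewrite h by lia. ring. }
  rewrite Hs. unfold Rdist. rewrite Rminus_diag_eq, Rabs_R0; [lra | reflexivity].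
Qed.

Section ProbabilityFacts.
Variable Omega : Type.
Variable F : set (set Omega).
Variable P : set Omega -> R.
Hypothesis hP : probability F P.

Lemma prob_sigma_algebra : sigma_algebra F.
Proof. exact (proj1 hP). Qed.

Lemma prob_nonneg (A : set Omega) : F A -> 0 <= P A.
Proof. apply (proj1 (proj2 hP)). Qed.

Lemma prob_empty : P (fun _ => False) = 0.
Proof.
  pose proof (proj2 (proj2 (proj2 hP)) (fun _ _ => False)
                (fun _ => sa_empty prob_sigma_algebra) ltac:(tauto)) as H.
  replace (fun w : Omega => exists _ : nat, False) with (fun _ : Omega => False) in H
    by (apply set_ext; firstorder).
  exact (infinite_sum_const _ _ H).
Qed.

Lemma prob_add2 (A B : set Omega) : F A -> F B -> (forall w, A w -> B w -> False) ->
  P (fun w => A w \/ B w) = P A + P B.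
Proof.
  intros hA hB hd.
  set (g := fun n : nat => match n with 0%nat => A | 1%nat => B | _ => fun _ => False end).
  assert (hg : forall n, F (g n))
    by (intros [|[|n]]; simpl; auto; apply (sa_empty prob_sigma_algebra)).
  assert (hgd : forall m n x, m <> n -> g m x -> g n x -> False).
  { intros [|[|m]] [|[|n]] x hmn; simpl; try tauto; try lia; eauto. }
  pose proof (proj2 (proj2 (proj2 hP)) g hg hgd) as H.
  replace (fun w => exists n, g n w) with (fun w => A w \/ B w) in H.
  2:{ apply set_ext; intro x; split.
      - intros [h|h]; [exists 0%nat | exists 1%nat]; auto.
      - intros [[|[|n]] h]; simpl in h; tauto. }
  refine (uniqueness_sum _ _ _ H _).
  replace (P A + P B) with (sum_f_R0 (fun n => P (g n)) 1) by (simpl; ring).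
  apply infinite_sum_stationary. intros [|[|n]] hn; [lia | lia | apply prob_empty].
Qed.

Lemma prob_mono (A B : set Omega) : F A -> F B -> (forall w, A w -> B w) -> P A <= P B.
Proof.
  intros hA hB hAB.
  assert (hD : F (fun w => B w /\ ~ A w)) by (apply (sa_diff prob_sigma_algebra); auto).
  pose proof (prob_add2 _ _ hA hD (fun w h1 h2 => proj2 h2 h1)) as H.
  cbv beta in H.
  replace (fun w => A w \/ (B w /\ ~ A w)) with B in H.
  2:{ apply set_ext; intro w; split;
      [intro h; destruct (classic (A w)); tauto | intros [h|[h _]]; auto]. }
  pose proof (prob_nonneg _ hD). lra.
Qed.

Lemma prob_le1 (A : set Omega) : F A -> P A <= 1.
Proof.
  intro hA. rewrite <- (proj1 (proj2 (proj2 hP))).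
  apply prob_mono; auto. apply (sa_full prob_sigma_algebra).
Qed.

Lemma disjointified_union (A : nat -> set Omega) (w : Omega) :
  (exists n, A n w) <-> exists n, A n w /\ ~ (exists m, (m < n)%nat /\ A m w).
Proof.
  split; [|intros [n [hn _]]; eauto].
  intros [n hn]. induction n as [n IH] using (well_founded_induction Wf_nat.lt_wf).
  destruct (classic (exists m, (m < n)%nat /\ A m w)) as [[m [hm1 hm2]]|hno].
  - exact (IH m hm1 hm2).
  - exists n; auto.
Qed.

Lemma prob_null_union (A : nat -> set Omega) :
  (forall n, F (A n)) -> (forall n, P (A n) = 0) -> P (fun w => exists n, A n w) = 0.
Proof.
  intros hA h0. assert (hF := prob_sigma_algebra).
  set (D := fun n w => A n w /\ ~ (exists m, (m < n)%nat /\ A m w)).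
  assert (hD : forall n, F (D n)).
  { intro n. apply (sa_diff hF); auto. apply (sa_union hF).
    intro m. destruct (Nat.lt_ge_cases m n) as [h|h].
    - apply (sa_ext _ _ _ (hA m)). intuition.
    - apply (sa_ext _ _ _ (sa_empty hF)). intuition lia. }
  assert (hD0 : forall n, P (D n) = 0).
  { intro n. pose proof (prob_mono _ _ (hD n) (hA n) ltac:(unfold D; tauto)).
    pose proof (prob_nonneg _ (hD n)). rewrite h0 in *. lra. }
  assert (hdisj : forall m n x, m <> n -> D m x -> D n x -> False).
  { intros m n x hmn [h1 h2] [h3 h4].
    destruct (Nat.lt_ge_cases m n); [apply h4; eauto | apply h2; exists n; split; auto; lia]. }
  pose proof (proj2 (proj2 (proj2 hP)) D hD hdisj) as H.
  replace (fun w => exists n, D n w) with (fun w => exists n, A n w) in H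
    by (apply set_ext; intro w; apply disjointified_union).
  refine (uniqueness_sum _ _ _ H _).
  replace 0 with (sum_f_R0 (fun n => P (D n)) 0) by (simpl; auto).
  apply infinite_sum_stationary. auto.
Qed.

Lemma prob_null_union2 (A B : set Omega) : F A -> F B -> P A = 0 -> P B = 0 ->
  P (fun w => A w \/ B w) = 0.
Proof.
  intros hA hB h0A h0B.
  set (g := fun n : nat => match n with 0%nat => A | _ => B end).
  replace (fun w => A w \/ B w) with (fun w => exists n, g n w).
  - apply prob_null_union; intros [|n]; auto.
  - apply set_ext; intro w; split.
    + intros [[|n] h]; auto.
    + intros [h|h]; [exists 0%nat | exists 1%nat]; auto.
Qed.

Lemma prob_nonnull_piece (A : nat -> set Omega) :
  (forall n, F (A n)) -> P (fun w => exists n, A n w) <> 0 -> exists n, P (A n) <> 0.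
Proof.
  intros hA h. apply NNPP; intro hn. apply h, prob_null_union; auto.
  intro n. apply NNPP; intro hne. apply hn; eauto.
Qed.

End ProbabilityFacts.

Arguments prob_sigma_algebra {Omega F P}.
Arguments prob_nonneg {Omega F P}.
Arguments prob_empty {Omega F P}.
Arguments prob_add2 {Omega F P}.
Arguments prob_mono {Omega F P}.
Arguments prob_le1 {Omega F P}.
Arguments prob_null_union {Omega F P}.
Arguments prob_null_union2 {Omega F P}.
Arguments prob_nonnull_piece {Omega F P}.

Lemma finite_of_cover {T : Type} (l : list T) : forall X : set T,
  (forall x, X x -> In x l) -> exists n, card_is X (Some n).
Proof.
  induction l as [|a l IH]; intros X HX.
  - exists 0%nat, nil. split; [reflexivity|]. split; [constructor|].
    intro x; split; [intro h; apply HX in h; destruct h | intros []].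
  - destruct (IH (fun x => X x /\ x <> a)) as [n [l0 [Hlen [Hnd Hiff]]]].
    { intros x [Hx Hne]. destruct (HX x Hx) as [<-|]; [congruence | auto]. }
    destruct (classic (X a)) as [Ha|Ha].
    + exists (S n), (a :: l0). split; [simpl; lia|]. split.
      * constructor; auto. intro Hin. apply Hiff in Hin. destruct Hin; congruence.
      * intro x. split.
        -- intro Hx. destruct (classic (x = a)) as [->|Hne];
             [left; auto | right; apply Hiff; auto].
        -- intros [<-|Hin]; [auto | apply Hiff in Hin; tauto].
    + exists n, l0. split; auto. split; auto. intro x. rewrite <- Hiff.
      split; [intro Hx; split; auto; intro; subst; auto | tauto].
Qed.

Lemma card_total {T : Type} (X : set T) : exists o, card_is X o.
Proof.
  destruct (classic (card_is X None)) as [h|h]; [exists None; auto|].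
  simpl in h. apply not_all_ex_not in h. destruct h as [l hl].
  destruct (finite_of_cover l X) as [n hn].
  - intros x hx. apply NNPP; intro hn. apply hl; eauto.
  - exists (Some n); auto.
Qed.

Lemma card_finite_infinite {T : Type} (X : set T) (n : nat) :
  card_is X (Some n) -> card_is X None -> False.
Proof. intros [l [_ [_ hl]]] h. destruct (h l) as [x [hx hn]]. apply hn, hl, hx. Qed.

Lemma finite_subset {T : Type} (X Y : set T) (n : nat) :
  card_is Y (Some n) -> (forall x, X x -> Y x) -> exists m, card_is X (Some m).
Proof.
  intros [L [_ [_ hL]]] hXY. apply (finite_of_cover L). intros x hx. apply hL; auto.
Qed.

Definition atleast {T : Type} (X : set T) (j : nat) : Prop :=
  exists l, NoDup l /\ length l = j /\ forall x, In x l -> X x.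

Lemma atleast_mono {T : Type} (X Y : set T) (j : nat) :
  (forall x, X x -> Y x) -> atleast X j -> atleast Y j.
Proof. intros h [l [h1 [h2 h3]]]. exists l; auto. Qed.

Lemma atleast_card_bound {T : Type} (X : set T) (m j : nat) :
  card_is X (Some m) -> atleast X j -> (j <= m)%nat.
Proof.
  intros [L [HL [_ Hiff]]] [l [hl [<- hx]]]. subst m. apply NoDup_incl_length; auto.
  intros x h; apply Hiff; auto.
Qed.

Lemma atleast_extend {T : Type} (X Y : set T) (m : nat) (y : T) :
  card_is X (Some m) -> (forall x, X x -> Y x) -> Y y -> ~ X y -> atleast Y (S m).
Proof.
  intros [L [hL1 [hL2 hL3]]] hXY hy hny. exists (y :: L). split; [|split].
  - constructor; auto. intro hin. apply hny, hL3, hin.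
  - simpl; lia.
  - intros x [<-|hx]; auto. apply hXY, hL3, hx.
Qed.

Lemma sublist_of_length {T : Type} (L : list T) : NoDup L -> forall j, (j <= length L)%nat ->
  exists l, NoDup l /\ length l = j /\ incl l L.
Proof.
  induction L as [|a L IH]; intros hnd j hj.
  - exists nil. simpl in hj. split; [constructor|]. split; [simpl; lia|]. intros x [].
  - inversion hnd; subst. destruct j as [|j].
    + exists nil. split; [constructor|]. split; [reflexivity|]. intros x [].
    + simpl in hj. destruct (IH H2 j ltac:(lia)) as [l [h1 [h2 h3]]].
      exists (a :: l). split; [constructor; auto|]. split; [simpl; lia|].
      intros x [<-|hx]; [left; auto | right; auto].
Qed.

Lemma atleast_infinite {T : Type} (X : set T) (j : nat) : card_is X None -> atleast X j.
Proof.
  intro hn. induction j as [|j IH].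
  - exists nil. split; [constructor|]. split; [reflexivity|]. intros x [].
  - destruct IH as [l [h1 [h2 h3]]]. destruct (hn l) as [x [hx hxn]].
    exists (x :: l). split; [constructor; auto|]. split; [simpl; lia|].
    intros y [<-|hy]; auto.
Qed.

Definition card_geq (j : nat) (o : option nat) : Prop :=
  match o with Some n => (j <= n)%nat | None => True end.

Lemma atleast_card {T : Type} (X : set T) (j : nat) :
  atleast X j <-> exists o, card_is X o /\ card_geq j o.
Proof.
  split.
  - intro ha. destruct (card_total X) as [[n|] hn].
    + exists (Some n). split; auto. exact (atleast_card_bound _ _ _ hn ha).
    + exists None; split; simpl; auto.
  - intros [[n|] [hn hg]]; simpl in hg.
    + destruct hn as [L [HL [Hnd Hiff]]].
      destruct (sublist_of_length L Hnd j ltac:(lia)) as [l [h1 [h2 h3]]].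
      exists l. split; auto. split; auto. intros x hx. apply Hiff; auto.
    + apply atleast_infinite; exact hn.
Qed.

Lemma nonempty_card {T : Type} (X : set T) :
  (exists x, X x) <-> exists o, card_is X o /\ o <> Some 0%nat.
Proof.
  split.
  - intros [x hx]. destruct (card_total X) as [o ho]. exists o. split; auto.
    intros ->. destruct ho as [l [hl [_ hi]]]. destruct l; [|discriminate].
    apply hi in hx. destruct hx.
  - intros [o [ho hne]]. apply NNPP; intro hn. apply hne.
    destruct o as [n|].
    + destruct ho as [l [hl [_ hi]]]. destruct l as [|a l]; [subst; auto|].
      exfalso; apply hn. exists a. apply hi; left; auto.
    + destruct (ho nil) as [x [hx _]]. exfalso; eauto.
Qed.

(** ** Measurability of counting events of a cr-set *)

Section CountingEvents.
Variables Omega T : Type.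
Variable F : set (set Omega).
Variable Sg : set (set T).
Hypothesis hS : sigma_algebra Sg.

Lemma meas_card (pi : Omega -> set T) (G : set T) (B : option nat -> Prop) :
  cr_set F Sg pi -> Sg G -> F (fun w => exists o, card_is (setI G (pi w)) o /\ B o).
Proof.
  intros [_ H] hG. apply (H (fun M => exists o, N_ G M o /\ B o)). apply gen_sigma_incl.
  exists G, B. split; auto. intro; tauto.
Qed.

Lemma meas_cardeq (pi : Omega -> set T) (G : set T) (o : option nat) :
  cr_set F Sg pi -> Sg G -> F (fun w => card_is (setI G (pi w)) o).
Proof.
  intros h hG. apply (sa_ext _ _ _ (meas_card pi G (fun o' => o' = o) h hG)).
  intro w. split; [intros [o' [h1 ->]]; auto | intro h1; exists o; auto].
Qed.

Lemma meas_atleast (pi : Omega -> set T) (G : set T) (j : nat) :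
  cr_set F Sg pi -> Sg G -> F (fun w => atleast (setI G (pi w)) j).
Proof.
  intros h hG. apply (sa_ext _ _ _ (meas_card pi G (card_geq j) h hG)).
  intro w. rewrite atleast_card. tauto.
Qed.

Lemma meas_nonempty (pi : Omega -> set T) (G : set T) :
  cr_set F Sg pi -> Sg G -> F (fun w => exists x, G x /\ pi w x).
Proof.
  intros h hG. apply (sa_ext _ _ _ (meas_card pi G (fun o => o <> Some 0%nat) h hG)).
  intro w. rewrite <- (nonempty_card (setI G (pi w))). unfold setI. tauto.
Qed.

(** Restricting to G ∈ S maps C(S)-measurable sets to C(S)-measurable sets,
    since N_A(M ∩ G) = N_{A ∩ G}(M). *)
Lemma CS_restrict (G : set T) : Sg G ->
  forall X, CS Sg X -> CS Sg (fun M => X (fun x => M x /\ G x)).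
Proof.
  intros hG X hX.
  apply (hX (fun X => CS Sg (fun M => X (fun x => M x /\ G x)))).
  - split; [|split].
    + apply (sa_full (gen_sigma_sigma_algebra _)).
    + intros A hA. exact (sa_compl (gen_sigma_sigma_algebra _) _ hA).
    + intros A hA. exact (sa_union (gen_sigma_sigma_algebra _) _ hA).
  - intros Y [A [B [hA hY]]]. apply gen_sigma_incl. exists (setI A G), B. split.
    + exact (sa_inter hS A G hA hG).
    + intro M. rewrite hY. unfold N_.
      replace (setI A (fun x => M x /\ G x)) with (setI (setI A G) M)
        by (apply set_ext; unfold setI; tauto). tauto.
Qed.

Lemma cr_set_restrict_off (pi : Omega -> set T) (G : set T) (N : set Omega) :
  sigma_algebra F -> cr_set F Sg pi -> Sg G -> F N ->
  cr_set F Sg (fun w x => ~ N w /\ (pi w x /\ G x)).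
Proof.
  intros hF hpi hG hN. split.
  - intro w. destruct (proj1 hpi w) as [f hf]. exists f. intros x [_ [hx _]]. auto.
  - intros X hX.
    apply (sa_ext _ (fun w => (N w /\ X (fun _ => False)) \/
                              (~ N w /\ X (fun x => pi w x /\ G x)))).
    + apply (sa_union2 hF).
      * destruct (classic (X (fun _ => False))) as [hx|hx].
        -- apply (sa_ext _ _ _ hN). tauto.
        -- apply (sa_ext _ _ _ (sa_empty hF)). tauto.
      * apply (sa_inter hF); [apply (sa_compl hF); exact hN|].
        apply (proj2 hpi (fun M => X (fun x => M x /\ G x))). apply CS_restrict; auto.
    + intro w. destruct (classic (N w)) as [hw|hw].
      * replace (fun x => ~ N w /\ (pi w x /\ G x)) with (fun _ : T => False)
          by (apply set_ext; tauto). tauto.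
      * replace (fun x => ~ N w /\ (pi w x /\ G x)) with (fun x => pi w x /\ G x)
          by (apply set_ext; tauto). tauto.
Qed.

End CountingEvents.

Arguments meas_cardeq {Omega T F Sg}.
Arguments meas_atleast {Omega T F Sg}.
Arguments meas_nonempty {Omega T F Sg}.
Arguments cr_set_restrict_off {Omega T F Sg}.

(** ** Simultaneous maximisation over a class closed under countable unions *)

Lemma lub_approx (E : R -> Prop) (s eps : R) :
  is_lub E s -> 0 < eps -> exists r, E r /\ s - eps < r.
Proof.
  intros [_ hleast] he. apply NNPP; intro hn.
  assert (hub : is_upper_bound E (s - eps)).
  { intros r hr. apply Rnot_lt_le. intro hlt. apply hn. eauto. }
  pose proof (hleast _ hub). lra.
Qed.

(** If C is nonempty and closed under countable unions, and the f_i are monotone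
    and bounded, then one element of C maximises all the f_i at once: take the union
    of near-maximisers for every i and every precision 1/(m+1). *)
Lemma simultaneous_maximizer {T : Type} (C : set (set T)) (f : nat -> set T -> R) (M : R) :
  (exists G0, C G0) ->
  (forall G : nat -> set T, (forall n, C (G n)) -> C (fun x => exists n, G n x)) ->
  (forall i (G G' : set T), C G -> C G' -> (forall x, G x -> G' x) -> f i G <= f i G') ->
  (forall i G, C G -> f i G <= M) ->
  exists Gstar, C Gstar /\ forall i G, C G -> f i G <= f i Gstar.
Proof.
  intros [G0 hG0] hunion hmono hbound.
  set (values := fun i r => exists G, C G /\ r = f i G).
  assert (hsup : forall i, {s : R | is_lub (values i) s}).
  { intro i. apply completeness.
    - exists M. intros r [G [hG ->]]. auto.
    - exists (f i G0), G0. auto. }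
  set (s := fun i => proj1_sig (hsup i)).
  assert (hs : forall i, is_lub (values i) (s i)) by (intro i; exact (proj2_sig (hsup i))).
  assert (happrox : forall i m, exists G, C G /\ s i - / INR (S m) < f i G).
  { intros i m. destruct (lub_approx _ _ (/ INR (S m)) (hs i)) as [r [[G [hG ->]] hr]].
    - apply Rinv_0_lt_compat, lt_0_INR; lia.
    - eauto. }
  destruct (choice (fun (im : nat * nat) G =>
                      C G /\ s (fst im) - / INR (S (snd im)) < f (fst im) G)) as [Ga hGa].
  { intros [i m]. apply happrox. }
  set (Gstar := fun x => exists i m, Ga (i, m) x).
  assert (hCstar : C Gstar).
  { apply hunion. intro i. apply (hunion (fun m => Ga (i, m))). intro m. apply (hGa (i, m)). }
  exists Gstar. split; [exact hCstar|]. intros i G hG.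
  assert (hle_sup : f i G <= s i) by (apply (proj1 (hs i)); exists G; auto).
  assert (hsup_le : s i <= f i Gstar).
  { apply Rnot_lt_le; intro hlt.
    destruct (archimed_cor1 (s i - f i Gstar) ltac:(lra)) as [[|m] [hm1 hm2]]; [lia|].
    pose proof (proj2 (hGa (i, m))) as hfar. cbn [fst snd] in hfar.
    assert (f i (Ga (i, m)) <= f i Gstar)
      by (apply hmono; [apply (hGa (i, m)) | exact hCstar | intros x hx; exists i, m; exact hx]).
    lra. }
  lra.
Qed.

(** ** The decomposition *)

Section Decomposition.
Variables Omega T : Type.
Variable F : set (set Omega).
Variable P : set Omega -> R.
Variable Sg : set (set T).
Variable pi : Omega -> set T.
Hypothesis hP : probability F P.
Hypothesis hS : sigma_algebra Sg.
Hypothesis hpi : cr_set F Sg pi.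

Definition as_finite_on (B : set T) : Prop :=
  P (fun w => card_is (setI B (pi w)) None) = 0.

Definition as_sigma_finite (G : set T) : Prop :=
  exists B : nat -> set T, (forall i, Sg (B i) /\ as_finite_on (B i)) /\
    forall x, G x <-> exists i, B i x.

Lemma as_sigma_finite_measurable (G : set T) : as_sigma_finite G -> Sg G.
Proof.
  intros [B [hB hG]]. apply (sa_ext _ _ _ (sa_union hS B (fun i => proj1 (hB i)))).
  intro x; rewrite hG; tauto.
Qed.

Lemma as_sigma_finite_empty : as_sigma_finite (fun _ => False).
Proof.
  exists (fun _ _ => False). split; [|firstorder]. intro i. split; [apply (sa_empty hS)|].
  unfold as_finite_on. rewrite <- (prob_empty hP). f_equal.
  apply set_ext; intro w; split; [|tauto].
  intro h. destruct (h nil) as [x [[hx _] _]]; auto.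
Qed.

Lemma as_sigma_finite_union (G : nat -> set T) :
  (forall n, as_sigma_finite (G n)) -> as_sigma_finite (fun x => exists n, G n x).
Proof.
  intros hG. destruct (choice (fun n B => (forall i, Sg (B i) /\ as_finite_on (B i)) /\
                                          forall x, G n x <-> exists i, B i x) hG) as [B hB].
  exists (fun i => B (fst (Cantor.of_nat i)) (snd (Cantor.of_nat i))). split.
  - intro i. apply hB.
  - intro x. split.
    + intros [n hn]. apply (proj2 (hB n)) in hn. destruct hn as [m hm].
      exists (Cantor.to_nat (n, m)). rewrite Cantor.cancel_of_to. exact hm.
    + intros [i hi]. exists (fst (Cantor.of_nat i)). apply (proj2 (hB _)). eauto.
Qed.

Lemma as_sigma_finite_add (G A : set T) :
  as_sigma_finite G -> Sg A -> as_finite_on A -> as_sigma_finite (fun x => G x \/ A x).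
Proof.
  intros [B [hB hG]] hA hfA.
  exists (fun i => match i with 0%nat => A | S i => B i end). split.
  - intros [|i]; auto.
  - intro x; rewrite hG; split.
    + intros [[i hi]|hx]; [exists (S i) | exists 0%nat]; auto.
    + intros [[|i] hi]; [right | left; exists i]; auto.
Qed.

(** Property (i) holds for every G ∈ Gs: off the null event N where some |π ∩ B_i| is
    infinite, π ∩ G is finite on each B_i and empty on G^c. *)
Lemma as_sigma_finite_prop_i (G : set T) : as_sigma_finite G -> prop_i F P Sg pi G.
Proof.
  intro hGs. assert (hF := prob_sigma_algebra hP).
  assert (hGm := as_sigma_finite_measurable G hGs).
  destruct hGs as [B [hB hG]].
  set (N := fun w => exists i, card_is (setI (B i) (pi w)) None).
  assert (hN : F N) by (apply (sa_union hF); intro i; apply (meas_cardeq pi _ _ hpi); apply hB).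
  assert (hPN : P N = 0).
  { apply (prob_null_union hP); intro i; [apply (meas_cardeq pi _ _ hpi) | ]; apply hB. }
  exists (fun w x => ~ N w /\ (pi w x /\ G x)). split.
  - split; [exact (cr_set_restrict_off hS pi G N hF hpi hGm hN)|].
    exists N. split; auto. split; auto. intros w hw x. unfold cr_inter, setI. tauto.
  - exists (fun n => match n with 0%nat => setC G | S i => B i end). split; [|split].
    + intros [|i]; [exact (sa_compl hS G hGm) | apply hB].
    + intro x. destruct (classic (G x)) as [hx|hx].
      * apply hG in hx; destruct hx as [i hi]; exists (S i); auto.
      * exists 0%nat; auto.
    + intros w [|i].
      * apply (finite_of_cover nil). intros x [[_ [_ h1]] h2]. contradiction.
      * destruct (card_total (setI (B i) (pi w))) as [[m|] hm].
        -- apply (finite_subset _ _ _ hm). intros x [[_ [h1 _]] h2]. split; auto.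
        -- apply (finite_of_cover nil). intros x [[hw _] _]. exfalso; apply hw; exists i; exact hm.
Qed.

Lemma version_as_finite (G A C : set T) (pi' : Omega -> set T) :
  version F P Sg (cr_inter pi G) pi' -> (forall w, finite_set (setI (pi' w) A)) ->
  Sg C -> (forall x, C x -> A x /\ G x) -> as_finite_on C.
Proof.
  intros [_ [N [hN [hPN hver]]]] hfin hC hCAG. unfold as_finite_on.
  apply Rle_antisym; [| apply (prob_nonneg hP), (meas_cardeq pi _ _ hpi); auto].
  rewrite <- hPN. apply (prob_mono hP); [apply (meas_cardeq pi _ _ hpi); auto | exact hN |].
  intros w hinf. apply NNPP; intro hw.
  destruct (hfin w) as [m hm].
  destruct (finite_subset (setI C (pi w)) _ _ hm) as [k hk].
  - intros x [hx hpx]. destruct (hCAG x hx) as [hA hG].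
    split; [apply (hver w hw); split|]; auto.
  - exact (card_finite_infinite _ _ hk hinf).
Qed.


(** Apply (ii) to F1 ∩ A_n for a σ-finite cover (A_n) of the
    version: the alternative P(|..| = ∞) > 0 is excluded by [version_as_finite]. *)
Lemma prop_i_prop_ii_disjoint (F1 F2 : set T) : Sg F1 -> Sg F2 ->
  prop_i F P Sg pi F1 -> prop_ii P Sg pi F2 ->
  P (fun w => exists x, (F1 x /\ ~ F2 x) /\ pi w x) = 0.
Proof.
  intros h1 h2 [pi' [hver [An [hAn [hcov hfin]]]]] hii.
  set (C := fun n x => (F1 x /\ An n x) /\ ~ F2 x).
  assert (hC : forall n, Sg (C n)) by (intro n; apply (sa_diff hS); auto; apply (sa_inter hS); auto).
  replace (fun w => exists x, (F1 x /\ ~ F2 x) /\ pi w x)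
    with (fun w => exists n, exists x, C n x /\ pi w x).
  2:{ apply set_ext; intro w; split.
      - intros [n [x [hx hp]]]. exists x. unfold C in hx. tauto.
      - intros [x [hx hp]]. destruct (hcov x) as [n hn]. exists n, x. unfold C; tauto. }
  apply (prob_null_union hP); intro n; [apply (meas_nonempty pi _ hpi); auto|].
  assert (hpiece : forall w, cr_inter (cr_inter pi (setC F2)) (fun x => F1 x /\ An n x) w
                             = setI (C n) (pi w))
    by (intro w; apply set_ext; intro x; unfold cr_inter, setI, setC, C; tauto).
  destruct (hii (fun x => F1 x /\ An n x) (sa_inter hS _ _ h1 (hAn n))) as [h|h].
  - replace (fun w => exists x, C n x /\ pi w x)
      with (fun w => exists x, cr_inter (cr_inter pi (setC F2)) (fun x => F1 x /\ An n x) w x);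
      [exact h|].
    apply set_ext; intro w. rewrite hpiece. apply iff_refl.
  - exfalso.
    assert (hnull : as_finite_on (C n)).
    { apply (version_as_finite F1 (An n) (C n) pi' hver (fun w => hfin w n) (hC n)).
      unfold C; tauto. }
    unfold as_finite_on in hnull.
    replace (fun w => card_is (setI (C n) (pi w)) None)
      with (fun w => card_is (cr_inter (cr_inter pi (setC F2)) (fun x => F1 x /\ An n x) w) None)
      in hnull by (apply set_ext; intro w; rewrite hpiece; tauto).
    lra.
Qed.

Lemma decomposition_unique (F1 F2 : set T) : Sg F1 -> Sg F2 ->
  prop_i F P Sg pi F1 -> prop_ii P Sg pi F1 ->
  prop_i F P Sg pi F2 -> prop_ii P Sg pi F2 ->
  P (fun w => exists x, cr_inter pi (symdiff F1 F2) w x) = 0.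
Proof.
  intros h1 h2 i1 ii1 i2 ii2.
  replace (fun w => exists x, cr_inter pi (symdiff F1 F2) w x)
    with (fun w => (exists x, (F1 x /\ ~ F2 x) /\ pi w x) \/
                   (exists x, (F2 x /\ ~ F1 x) /\ pi w x)).
  - apply (prob_null_union2 hP); [apply (meas_nonempty pi _ hpi), (sa_diff hS); auto
                                 | apply (meas_nonempty pi _ hpi), (sa_diff hS); auto
                                 | apply prop_i_prop_ii_disjoint; auto
                                 | apply prop_i_prop_ii_disjoint; auto].
  - apply set_ext; intro w. unfold cr_inter, setI, symdiff. split.
    + intros [[x hx]|[x hx]]; exists x; tauto.
    + intros [x [hx [hd|hd]]]; [left | right]; exists x; tauto.
Qed.

Variable pik : nat -> Omega -> set T.
Hypothesis hpik : forall k, finite_cr_set F Sg (pik k).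
Hypothesis hpi_union : forall w x, pi w x <-> exists k, pik k w x.

Definition count_event (k j : nat) (G : set T) : set Omega :=
  fun w => atleast (setI G (pik k w)) j.

Lemma count_event_measurable (k j : nat) (G : set T) : Sg G -> F (count_event k j G).
Proof. intro hG. exact (meas_atleast (pik k) G j (proj1 (hpik k)) hG). Qed.

Lemma count_event_mono (k j : nat) (G G' : set T) :
  (forall x, G x -> G' x) -> forall w, count_event k j G w -> count_event k j G' w.
Proof.
  intros hGG' w. apply atleast_mono. intros x [hx hp]. split; auto.
Qed.

Lemma as_sigma_finite_maximizer : exists Gstar, as_sigma_finite Gstar /\
  forall k j G, as_sigma_finite G -> P (count_event k j G) <= P (count_event k j Gstar).
Proof.
  set (f := fun i G => P (count_event (fst (Cantor.of_nat i)) (snd (Cantor.of_nat i)) G)).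
  destruct (simultaneous_maximizer as_sigma_finite f 1) as [Gstar [hGs hmax]].
  - exists (fun _ => False). exact as_sigma_finite_empty.
  - exact as_sigma_finite_union.
  - intros i G G' hG hG' hGG'. apply (prob_mono hP);
      [| | apply count_event_mono; exact hGG'];
      apply count_event_measurable, as_sigma_finite_measurable; assumption.
  - intros i G hG. apply (prob_le1 hP), count_event_measurable, as_sigma_finite_measurable, hG.
  - exists Gstar. split; [exact hGs|]. intros k j G hG.
    pose proof (hmax (Cantor.to_nat (k, j)) G hG) as h.
    unfold f in h. rewrite Cantor.cancel_of_to in h. exact h.
Qed.

Definition level_event (k m : nat) (G A : set T) : set Omega :=
  fun w => (exists x, A x /\ pik k w x) /\ card_is (setI G (pik k w)) (Some m).

Lemma level_event_measurable (k m : nat) (G A : set T) :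
  Sg G -> Sg A -> F (level_event k m G A).
Proof.
  intros hG hA. apply (sa_inter (prob_sigma_algebra hP)).
  - exact (meas_nonempty (pik k) A (proj1 (hpik k)) hA).
  - exact (meas_cardeq (pik k) G _ (proj1 (hpik k)) hG).
Qed.

(** If π hits A with non-null probability, then so does some π_k on some level
    |π_k ∩ G| = m, since the π_k cover π and are finite. *)
Lemma nonnull_level_event (G A : set T) : Sg G -> Sg A ->
  P (fun w => exists x, A x /\ pi w x) <> 0 -> exists k m, 0 < P (level_event k m G A).
Proof.
  intros hG hA hhit.
  set (hits := fun k w => exists x, A x /\ pik k w x).
  assert (hhits : forall k, F (hits k))
    by (intro k; exact (meas_nonempty (pik k) A (proj1 (hpik k)) hA)).
  destruct (prob_nonnull_piece hP hits hhits) as [k hk].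
  { replace (fun w => exists k, hits k w) with (fun w => exists x, A x /\ pi w x); [exact hhit|].
    apply set_ext; intro w. unfold hits. split.
    - intros [x [hx hp]]. apply hpi_union in hp. destruct hp as [k hk]. eauto.
    - intros [k [x [hx hp]]]. exists x. split; auto. apply hpi_union. eauto. }
  destruct (prob_nonnull_piece hP (fun m => level_event k m G A)
              (fun m => level_event_measurable k m G A hG hA)) as [m hm].
  { replace (fun w => exists m, level_event k m G A w) with (hits k); [exact hk|].
    apply set_ext; intro w. split; [|intros [m [hw _]]; exact hw].
    intro hw. destruct (proj2 (hpik k) w) as [n hn].
    destruct (finite_subset (setI G (pik k w)) _ _ hn) as [m hm]; [intros x [_ hx]; exact hx|].
    exists m. split; auto. }
  exists k, m. pose proof (prob_nonneg hP _ (level_event_measurable k m G A hG hA)). lra.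
Qed.

(** Adding to G a set A ∈ S disjoint from G and hit by π with non-null probability
    strictly increases some P(|π_k ∩ G| ≥ j): on a non-null level event,
    |π_k ∩ (G ∪ A)| ≥ m + 1 > m = |π_k ∩ G|. *)
Lemma enlarging_increases_count (G A : set T) :
  Sg G -> Sg A -> (forall x, A x -> ~ G x) -> P (fun w => exists x, A x /\ pi w x) <> 0 ->
  exists k j, P (count_event k j G) < P (count_event k j (fun x => G x \/ A x)).
Proof.
  intros hG hA hdisj hhit. assert (hF := prob_sigma_algebra hP).
  destruct (nonnull_level_event G A hG hA hhit) as [k [m hpos]].
  assert (hD := level_event_measurable k m G A hG hA).
  exists k, (S m).
  assert (hGA : Sg (fun x => G x \/ A x)) by (apply (sa_union2 hS); auto).
  assert (hD_new : forall w, level_event k m G A w -> count_event k (S m) (fun x => G x \/ A x) w).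
  { intros w [[x [hx hp]] hc]. apply (atleast_extend _ _ _ x hc).
    - intros y [hy hpy]. split; [left|]; auto.
    - split; [right|]; auto.
    - intros [hxG _]. exact (hdisj x hx hxG). }
  assert (hD_old : forall w, level_event k m G A w -> count_event k (S m) G w -> False).
  { intros w [_ hc] hw. pose proof (atleast_card_bound _ _ _ hc hw). lia. }
  pose proof (prob_add2 hP _ _ hD (count_event_measurable k (S m) G hG) hD_old) as hadd.
  assert (P (fun w => level_event k m G A w \/ count_event k (S m) G w)
          <= P (count_event k (S m) (fun x => G x \/ A x))).
  { apply (prob_mono hP); [apply (sa_union2 hF); auto; apply count_event_measurable; auto
                          | apply count_event_measurable; auto |].
    intros w [hw|hw]; [apply hD_new; exact hw|].
    apply (count_event_mono k (S m) G); auto. }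
  lra.
Qed.

(** A simultaneous maximiser G* ∈ Gs satisfies (ii): otherwise A \ G* is a.s. finite
    but hit with positive probability, and adding it to G* contradicts maximality. *)
Lemma maximizer_prop_ii (Gstar : set T) : as_sigma_finite Gstar ->
  (forall k j G, as_sigma_finite G -> P (count_event k j G) <= P (count_event k j Gstar)) ->
  prop_ii P Sg pi Gstar.
Proof.
  intros hGs hmax A hA. assert (hGm := as_sigma_finite_measurable _ hGs).
  set (A' := fun x => A x /\ ~ Gstar x).
  assert (hA' : Sg A') by (apply (sa_diff hS); auto).
  assert (hpiece : forall w, cr_inter (cr_inter pi (setC Gstar)) A w = setI A' (pi w))
    by (intro w; apply set_ext; intro x; unfold cr_inter, setI, setC, A'; tauto).
  destruct (classic (P (fun w => exists x, cr_inter (cr_inter pi (setC Gstar)) A w x) = 0))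
    as [h0|h0]; [left; exact h0 | right].
  apply Rnot_le_lt; intro hle.
  assert (hfin : as_finite_on A').
  { apply Rle_antisym; [|apply (prob_nonneg hP), (meas_cardeq pi _ _ hpi hA')].
    replace (fun w => card_is (setI A' (pi w)) None)
      with (fun w => card_is (cr_inter (cr_inter pi (setC Gstar)) A w) None); [exact hle|].
    apply set_ext; intro w. rewrite hpiece. apply iff_refl. }
  destruct (enlarging_increases_count Gstar A' hGm hA') as [k [j hlt]].
  - intros x [_ hx]. exact hx.
  - replace (fun w => exists x, A' x /\ pi w x)
      with (fun w => exists x, cr_inter (cr_inter pi (setC Gstar)) A w x); [exact h0|].
    apply set_ext; intro w. rewrite hpiece. apply iff_refl.
  - pose proof (hmax k j _ (as_sigma_finite_add Gstar A' hGs hA' hfin)). lra.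
Qed.

End Decomposition.

Arguments as_sigma_finite_measurable {Omega T P Sg pi}.
Arguments as_sigma_finite_prop_i {Omega T F P Sg pi}.
Arguments as_sigma_finite_maximizer {Omega T F P Sg pi}.
Arguments maximizer_prop_ii {Omega T F P Sg pi}.
Arguments decomposition_unique {Omega T F P Sg pi}.

Theorem theorem1p10 (Omega T : Type) (F : set (set Omega)) (P : set Omega -> R)
    (Sg : set (set T)) (pi : Omega -> set T) :
  probability F P ->
  sigma_algebra Sg ->
  prod_sigma Sg (diagonal T) ->
  cr_set F Sg pi ->
  constructive F Sg pi ->
  (exists F0, Sg F0 /\ prop_i F P Sg pi F0 /\ prop_ii P Sg pi F0) /\
  (forall F1 F2, Sg F1 -> Sg F2 ->
     prop_i F P Sg pi F1 -> prop_ii P Sg pi F1 ->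
     prop_i F P Sg pi F2 -> prop_ii P Sg pi F2 ->
     P (fun w => exists x, cr_inter pi (symdiff F1 F2) w x) = 0).
Proof.
  intros hP hS _ hpi [pik [hpik hpi_union]]. split.
  - destruct (as_sigma_finite_maximizer hP hS hpi pik hpik)
      as [Gstar [hGs hmax]].
    exists Gstar. split; [|split].
    + exact (as_sigma_finite_measurable hS Gstar hGs).
    + exact (as_sigma_finite_prop_i hP hS hpi Gstar hGs).
    + exact (maximizer_prop_ii hP hS hpi pik hpik hpi_union Gstar hGs hmax).
  - exact (decomposition_unique hP hS hpi).
Qed.
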